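(* Let $k\geq 2$ be an integer, let $t_0,t_1,\ldots,t_{k-1}$ be arbitrary (real or complex) numbers, and let $(\mathfrak{F}_n^{(k)})_{n\geq 0}$ be the $k$-generalized Fibonacci-like sequence defined by $\mathfrak{F}_i^{(k)}=t_i$ for $0\leq i\leq k-1$ and $\mathfrak{F}_n^{(k)}=\mathfrak{F}_{n-1}^{(k)}+\mathfrak{F}_{n-2}^{(k)}+\cdots+\mathfrak{F}_{n-k}^{(k)}$ for $n\geq k$. Let $\lambda_1,\lambda_2,\ldots,\lambda_k$ be the roots of the characteristic polynomial $P(\lambda)=\lambda^k-\lambda^{k-1}-\cdots-\lambda-1$. Then for all $n\geq k$, $$\mathfrak{F}_n^{(k)}=\sum_{m=1}^{k}\left[\frac{\displaystyle\sum_{p=1}^{k}\left(\lambda_m^{k-p}-\sum_{i=1}^{k-p}\lambda_m^{(k-p)-i}\right)t_{p-1}}{\displaystyle\prod_{j=1,\ j\neq m}^{k}(\lambda_m-\lambda_j)}\right]\lambda_m^n.$$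
   Context: The roots $\lambda_1,\ldots,\lambda_k$ are complex numbers, listed with multiplicity (they are in fact pairwise distinct, so the denominators are nonzero). An empty sum (e.g. $\sum_{i=1}^{0}$ when $p=k$) equals $0$. *)

From HB Require Import structures.
From mathcomp Require Import all_boot all_order all_algebra.
Set Implicit Arguments. Unset Strict Implicit. Unset Printing Implicit Defensive.
Import Order.TTheory GRing.Theory Num.Theory.
Local Open Scope ring_scope.

Definition kfib_charpoly (C : nzRingType) (k : nat) : {poly C} :=
  'X^k - \sum_(i < k) 'X^i.

Definition is_kfib (C : nzRingType) (k : nat) (t : nat -> C) (F : nat -> C) : Prop :=
  (forall i, (i < k)%N -> F i = t i) /\
  (forall n, (k <= n)%N -> F n = \sum_(1 <= j < k.+1) F (n - j)%N).

From HB Require Import structures.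
From mathcomp Require Import all_boot all_order all_algebra.
From mathcomp Require Import ring zify.
Import Order.TTheory GRing.Theory Num.Theory.
Set Implicit Arguments.
Unset Strict Implicit.
Unset Printing Implicit Defensive.

Local Open Scope ring_scope.

(* The right-hand side is a linear combination of the geometric sequences
   (lambda_m ^ n), each of which satisfies the recurrence because lambda_m is a
   root of P = X^k - X^(k-1) - ... - 1; so it suffices to match the k initial
   values.  The roots are simple: a double root a of P is a double root of
   (X - 1) P = X^(k+1) - 2 X^k + 1, which forces a = 2k/(k+1) and then
   (k+1)^(k+1) = 2 (2k)^k, impossible for k >= 2 since k divides the right
   side and is coprime to the left one.  Hence
   f |-> sum_m f(lambda_m) / prod_(j <> m) (lambda_m - lambda_j) is the divided
   difference of f at the roots: it reads off the coefficient of X^(k-1) when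
   deg f < k, and only depends on the values of f at the roots.  Writing
   P_r = X^r - X^(r-1) - ... - 1, the coefficient of t_q in the closed form is
   the divided difference of X^n P_(k-q-1), which is 1 if n = q and 0 for the
   other n < k. *)

Lemma big_nat1_rev (R : nmodType) (r : nat) (f : nat -> R) :
  \sum_(1 <= i < r.+1) f (r - i)%N = \sum_(i < r) f i.
Proof.
rewrite big_add1 /= big_mkord (reindex_inj rev_ord_inj) /=.
by apply: eq_bigr => i _; congr f; have := ltn_ord i; lia.
Qed.

Section CharPoly.
Variable R : comNzRingType.
Local Notation P := (kfib_charpoly R).

Lemma horner_kfib_charpoly r (a : R) :
  (P r).[a] = a ^+ r - \sum_(1 <= i < r.+1) a ^+ (r - i).
Proof.
rewrite big_nat1_rev /kfib_charpoly hornerD hornerN hornerXn horner_sum.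
by under eq_bigr do rewrite hornerXn.
Qed.

Lemma coef_kfib_charpoly r j : (P r)`_j = (j == r)%:R - (j < r)%:R.
Proof.
rewrite coefB coefXn coef_sum.
under eq_bigr do rewrite coefXn.
case: (ltnP j r) => [jr | rj].
  rewrite (bigD1 (Ordinal jr)) //= eqxx big1 ?addr0 ?ltn_eqF //.
  by move=> i; rewrite -val_eqE /= eq_sym => /negPf ->.
rewrite big1 ?ltnNge ?rj // => i _.
by rewrite gtn_eqF // (leq_trans (ltn_ord i)).
Qed.

Lemma mulXn_kfib_charpoly k r : (r <= k)%N ->
  'X^(k - r) * P r = P k + \sum_(i < k - r) 'X^i.
Proof.
move=> rk.
have split_sum : \sum_(i < k) 'X^i
    = \sum_(i < k - r) 'X^i + 'X^(k - r) * \sum_(i < r) 'X^i :> {poly R}.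
  rewrite -!(big_mkord xpredT) (big_cat_nat (n := k - r)) ?leq_subr //=.
  rewrite -{2}[(k - r)%N]add0n big_addn subKn // mulr_sumr big_mkord; congr (_ + _).
  by apply: eq_bigr => i _; rewrite -exprD addnC.
by rewrite /kfib_charpoly split_sum mulrBr -exprD subnK //; ring.
Qed.

Lemma mulXsub1_kfib_charpoly k : ('X - 1) * P k = 'X^(k.+1) - 'X^k *+ 2 + 1.
Proof. by rewrite /kfib_charpoly mulrBr -subrX1 exprS; ring. Qed.

Lemma kfib_charpoly_root_rec k (a : R) : root (P k) a ->
  forall n, (k <= n)%N -> a ^+ n = \sum_(1 <= j < k.+1) a ^+ (n - j).
Proof.
rewrite /root horner_kfib_charpoly subr_eq0 => /eqP ak n kn.
rewrite -(subnK kn) exprD ak mulr_sumr; apply: eq_big_nat => j /andP [_ jk].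
by rewrite -exprD; congr (_ ^+ _); lia.
Qed.

End CharPoly.

Lemma succ_expn_neq (k : nat) : (1 < k)%N -> (k.+1 ^ k.+1 != 2 * k.*2 ^ k)%N.
Proof.
move=> k_gt1; apply/eqP => E.
have k_dvd : (k %| k.+1 ^ k.+1)%N.
  by rewrite E -mul2n expnMn !dvdn_mull // dvdn_exp // ltnW.
have := coprimeXr k.+1 (coprimenS k); rewrite /coprime (gcdn_idPl k_dvd).
by move/eqP => k1; rewrite k1 in k_gt1.
Qed.

(* The derivative condition gives a (l + 2) = 2 (l + 1); substitute into the
   first equation scaled by (l + 2)^(l + 2). *)
Lemma double_root_kfib_expn (R : numDomainType) l (a : R) :
  a ^+ l.+2 - a ^+ l.+1 *+ 2 + 1 = 0 -> a ^+ l.+1 *+ l.+2 = a ^+ l *+ (l.+1).*2 ->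
  (l.+2 ^ l.+2 = 2 * (l.+1).*2 ^ l.+1)%N.
Proof.
move=> Qa dQa; apply/eqP; rewrite -(eqr_nat R) natrM !natrX.
have LK : (l.+1).*2%:R = l.+2%:R *+ 2 - 2 :> R.
  by rewrite -mulrnA -natrB muln2 ?doubleS.
rewrite -[_ *+ l.+2]mulr_natr -[_ *+ _.*2]mulr_natr in dQa.
move: LK dQa; move: (l.+2%:R) ((l.+1).*2%:R) => K L LK dQa.
have a_neq0 : a != 0.
  by apply: contra_eq_neq Qa => ->; rewrite !expr0n mul0rn subr0 add0r oner_neq0.
have aK : a * K = L.
  have : a ^+ l * (a * K - L) = 0 by rewrite mulrBr mulrA -exprSr dQa subrr.
  by move/eqP; rewrite mulf_eq0 expf_eq0 (negPf a_neq0) andbF subr_eq0 => /eqP.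
have key : K ^+ l.+2 * (a ^+ l.+2 - a ^+ l.+1 *+ 2 + 1)
    = K ^+ l.+2 - 2 * L ^+ l.+1.
  have <- : K *+ 2 - L = 2 by rewrite LK; ring.
  by rewrite -aK !exprS !exprMn; move: (a ^+ l) (K ^+ l) => x y; ring.
by rewrite Qa mulr0 in key; rewrite -subr_eq0 -key.
Qed.

Lemma kfib_charpoly_neq_sqr_mul (R : numDomainType) k (a : R) (q : {poly R}) :
  (1 < k)%N -> kfib_charpoly R k != ('X - a%:P) ^+ 2 * q.
Proof.
case: k => [|[|l]] // _; apply/eqP => Pq.
have Qq : 'X^(l.+3) - 'X^(l.+2) *+ 2 + 1
    = ('X - a%:P) * (('X - a%:P) * (('X - 1) * q)).
  by rewrite -mulXsub1_kfib_charpoly Pq; ring.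
have Qa : a ^+ l.+3 - a ^+ l.+2 *+ 2 + 1 = 0.
  have := congr1 (horner^~ a) Qq; rewrite /= !hornerM hornerXsubC subrr !mul0r => <-.
  by rewrite !hornerE mulr2n.
have dQa : a ^+ l.+2 *+ l.+3 = a ^+ l.+1 *+ (l.+2).*2.
  have := congr1 (fun p => p^`().[a]) Qq.
  rewrite /= derivM hornerD !hornerM hornerXsubC subrr !(mul0r, mulr0, addr0).
  rewrite !(derivD, derivN, derivMn, derivXn, derivC) addr0 hornerD hornerN hornerMn.
  rewrite hornerD !hornerMn !hornerXn -mulr2n -mulrnA muln2.
  by move/eqP; rewrite subr_eq0 => /eqP.
by move/eqP: (double_root_kfib_expn Qa dQa); apply/negP/succ_expn_neq.
Qed.

Lemma kfib_roots_inj (R : numDomainType) k (lambda : 'I_k -> R) : (1 < k)%N ->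
  kfib_charpoly R k = \prod_(m < k) ('X - (lambda m)%:P) -> injective lambda.
Proof.
move=> k_gt1 Pfact i j lij; apply/eqP; apply: contraT => neq_ij.
pose q := \prod_(m < k | (m != i) && (m != j)) ('X - (lambda m)%:P).
have /eqP[] := kfib_charpoly_neq_sqr_mul (lambda i) q k_gt1.
by rewrite Pfact (bigD1 i) // (bigD1 j) 1?eq_sym //= -lij mulrA -expr2.
Qed.

Lemma size_sum_polyXn (R : nzSemiRingType) r :
  (size (\sum_(i < r) 'X^i : {poly R})%R <= r)%N.
Proof.
apply/leq_sizeP => j rj; rewrite coef_sum big1 // => i _.
by rewrite coefXn gtn_eqF // (leq_trans (ltn_ord i)).
Qed.

Section DividedDifference.
Variables (F : fieldType) (k : nat) (x : 'I_k -> F).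
Hypothesis x_inj : injective x.

Definition divdiff (f : {poly F}) : F :=
  \sum_(m < k) f.[x m] / \prod_(j < k | j != m) (x m - x j).

Lemma divdiff_denom_neq0 m : \prod_(j < k | j != m) (x m - x j) != 0.
Proof. by apply/prodf_neq0 => j; apply: contraNneq => /subr0_eq/x_inj ->. Qed.

Lemma divdiff_coef (f : {poly F}) : (size f <= k)%N -> divdiff f = f`_k.-1.
Proof.
move=> size_f.
pose B m := \prod_(j < k | j != m) ('X - (x j)%:P).
have size_B m : size (B m) = k.
  rewrite size_prod => [|j _]; last by rewrite polyXsubC_eq0.
  under eq_bigr do rewrite size_XsubC.
  by rewrite sum_nat_const cardC1 card_ord; have := ltn_ord m; lia.
have B_coef m : (B m)`_k.-1 = 1.
  have /monicP := monic_prod_XsubC (index_enum 'I_k) (predC1 m) x.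
  by rewrite lead_coefE size_B.
have B_horner m i :
    (B m).[x i] = if m == i then \prod_(j < k | j != m) (x m - x j) else 0.
  rewrite horner_prod; case: eqP => [<- | /eqP neq_mi].
    by apply: eq_bigr => j _; rewrite hornerXsubC.
  by rewrite (bigD1 i) 1?eq_sym //= hornerXsubC subrr mul0r.
pose L := \sum_(m < k) (f.[x m] / \prod_(j < k | j != m) (x m - x j)) *: B m.
have fL : f = L.
  apply/eqP; rewrite -subr_eq0; apply/eqP.
  apply: (@roots_geq_poly_eq0 _ _ [seq x i | i <- enum 'I_k]).
  - apply/allP => _ /mapP [i _ ->].
    rewrite /root hornerD hornerN subr_eq0 /L horner_sum.
    rewrite (bigD1 i) //= [X in _ + X]big1 => [|m /negPf neq_mi].
      by rewrite hornerZ B_horner eqxx divfK ?divdiff_denom_neq0 ?addr0.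
    by rewrite hornerZ B_horner neq_mi mulr0.
  - by rewrite map_inj_uniq ?enum_uniq.
  - rewrite size_map size_enum_ord (leq_trans (size_polyD _ _)) //.
    rewrite size_polyN geq_max size_f.
    apply: (leq_trans (size_sum _ _ _)); apply/bigmax_leqP => m _.
    by rewrite (leq_trans (size_scale_leq _ _)) ?size_B.
rewrite {2}fL coef_sum; apply: eq_bigr => m _.
by rewrite coefZ B_coef mulr1.
Qed.

End DividedDifference.

Lemma is_kfib_unique (R : nzRingType) k (t F G : nat -> R) :
  is_kfib k t F -> is_kfib k t G -> F =1 G.
Proof.
move=> [F_init F_rec] [G_init G_rec]; elim/ltn_ind => n IH.
have [nk | kn] := ltnP n k; first by rewrite F_init ?G_init.
rewrite F_rec ?G_rec //; apply: eq_big_nat => j /andP [j_gt0 j_le_k].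
by apply: IH; lia.
Qed.

Section ClosedForm.
Variables (C : fieldType) (k : nat) (lambda : 'I_k -> C).
Hypotheses (lambda_inj : injective lambda)
  (lambda_root : forall m, root (kfib_charpoly C k) (lambda m)).
Local Notation P := (kfib_charpoly C).

Definition kfib_closed_form (t : nat -> C) (n : nat) : C :=
  \sum_(m < k)
      ((\sum_(1 <= p < k.+1)
          (lambda m ^+ (k - p) - \sum_(1 <= i < (k - p).+1) lambda m ^+ ((k - p) - i))
          * t p.-1)
       / (\prod_(j < k | j != m) (lambda m - lambda j)))
      * lambda m ^+ n.

Lemma kfib_closed_form_rec t n : (k <= n)%N ->
  kfib_closed_form t n = \sum_(1 <= j < k.+1) kfib_closed_form t (n - j).
Proof.
move=> kn; rewrite /kfib_closed_form exchange_big /=; apply: eq_bigr => m _.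
by rewrite -mulr_sumr -kfib_charpoly_root_rec.
Qed.

Lemma kfib_closed_formE t n :
  kfib_closed_form t n = \sum_(q < k) t q * divdiff lambda ('X^n * P (k - q.+1)).
Proof.
rewrite /divdiff; under eq_bigr => q _ do rewrite mulr_sumr.
rewrite exchange_big /=; apply: eq_bigr => m _.
rewrite big_add1 big_mkord /= !mulr_suml; apply: eq_bigr => q _.
rewrite -horner_kfib_charpoly hornerM hornerXn.
by move: (lambda m ^+ n) (P _).[_] (\prod_(_ < _ | _) _) => a b c; ring.
Qed.

Lemma divdiff_mulXn_kfib_charpoly n q : (n < k)%N -> (q < k)%N ->
  divdiff lambda ('X^n * P (k - q.+1)) = (n == q)%:R.
Proof.
move=> nk qk; have [nq | qn] := leqP n q.
  rewrite divdiff_coef //.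
    rewrite coefXnM coef_kfib_charpoly ltnNge (_ : n <= k.-1)%N; last lia.
    have -> : (k.-1 - n == k - q.+1)%N = (n == q) by apply/eqP/eqP; lia.
    by rewrite (_ : (k.-1 - n < k - q.+1)%N = false) ?subr0 //; apply/negbTE; lia.
  apply/leq_sizeP => j kj.
  rewrite coefXnM coef_kfib_charpoly ltnNge (_ : n <= j)%N; last lia.
  rewrite (_ : (j - n == k - q.+1)%N = false); last by apply/negbTE; lia.
  by rewrite (_ : (j - n < k - q.+1)%N = false) ?subr0 //; apply/negbTE; lia.
(* X^(q+1) P_(k-q-1) = P_k + (1 + X + ... + X^q), and P_k vanishes at the roots. *)
pose g : {poly C} := 'X^(n - q.+1) * \sum_(i < q.+1) 'X^i.
have size_g : (size g <= n)%N.
  rewrite (leq_trans (size_polyMleq _ _)) // size_polyXn addSn /=.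
  by rewrite -{2}(subnK qn) leq_add2l size_sum_polyXn.
have XP : 'X^(q.+1) * P (k - q.+1) = P k + \sum_(i < q.+1) 'X^i.
  by rewrite -{1}(subKn qk) mulXn_kfib_charpoly ?leq_subr // subKn.
have -> : divdiff lambda ('X^n * P (k - q.+1)) = divdiff lambda g.
  apply: eq_bigr => m _; congr (_ / _).
  rewrite -(subnK qn) exprD -mulrA XP mulrDr !hornerD !hornerM.
  by rewrite (rootP (lambda_root m)) mulr0 add0r.
rewrite divdiff_coef ?(leq_trans size_g (ltnW nk)) // nth_default ?gtn_eqF //.
by rewrite (leq_trans size_g) // -ltnS prednK // (leq_ltn_trans _ nk).
Qed.

Lemma kfib_closed_form_init t n : (n < k)%N -> kfib_closed_form t n = t n.
Proof.
move=> nk; rewrite kfib_closed_formE (bigD1 (Ordinal nk)) //=.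
rewrite divdiff_mulXn_kfib_charpoly // eqxx mulr1 big1 ?addr0 // => q.
rewrite -val_eqE eq_sym => /= /negPf nq.
by rewrite divdiff_mulXn_kfib_charpoly // nq mulr0.
Qed.

Lemma kfib_closed_form_is_kfib t : is_kfib k t (kfib_closed_form t).
Proof. by split=> n; [exact: kfib_closed_form_init | exact: kfib_closed_form_rec]. Qed.

End ClosedForm.

Theorem theorem2 (C : numClosedFieldType) (k : nat) (hk : (2 <= k)%N)
  (t : nat -> C) (F : nat -> C) (hF : is_kfib k t F)
  (lambda : 'I_k -> C)
  (hroots : kfib_charpoly C k = \prod_(m < k) ('X - (lambda m)%:P)) :
  forall n : nat, (k <= n)%N ->
    F n = \sum_(m < k)
      ((\sum_(1 <= p < k.+1)
          (lambda m ^+ (k - p) - \sum_(1 <= i < (k - p).+1) lambda m ^+ ((k - p) - i))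
          * t p.-1)
       / (\prod_(j < k | j != m) (lambda m - lambda j)))
      * lambda m ^+ n.
Proof.
have lambda_inj := kfib_roots_inj hk hroots.
have lambda_root m : root (kfib_charpoly C k) (lambda m).
  rewrite hroots -(big_map lambda xpredT (fun a => 'X - a%:P)) root_prod_XsubC.
  by rewrite map_f ?mem_index_enum.
move=> n _.
exact: is_kfib_unique hF (kfib_closed_form_is_kfib lambda_inj lambda_root t) n.
Qed.
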